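(* Let $k$ be a positive integer with $k\equiv0\pmod4$. Then $\Bbbk_{-1}[u,v]^{G_{1,k}}\cong\Bbbk[u,v]^{\frac1{2k}(1,k+1)}$; in particular it is a commutative cyclic quotient singularity.
   Context: $\Bbbk$ is algebraically closed of characteristic $0$; $\Bbbk_{-1}[u,v]=\Bbbk\langle u,v\rangle/(vu+uv)$; matrices $\begin{pmatrix}a&b\\c&d\end{pmatrix}$ act by $u\mapsto au+cv$, $v\mapsto bu+dv$. $G_{n,k}$ is generated by $\mathrm{diag}(\omega^{2k},\omega^{-2k})$ and $\begin{pmatrix}0&\omega^n\\\omega^n&0\end{pmatrix}$ for $\omega$ a primitive $(2nk)$th root of unity (so $G_{1,k}$ is cyclic, generated by the antidiagonal matrix with entries a primitive $2k$th root of unity). $\frac1m(1,b)$ is the cyclic group generated by $\mathrm{diag}(\omega_m,\omega_m^b)$ acting on the commutative polynomial ring $\Bbbk[u,v]$. *)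

From HB Require Import structures.
From mathcomp Require Import all_boot all_order all_algebra.
Set Implicit Arguments. Unset Strict Implicit. Unset Printing Implicit Defensive.
Import Order.TTheory GRing.Theory Num.Theory.
Local Open Scope ring_scope.

(* Both k_{-1}[u,v] and k[u,v] are modelled on the K-vector space
   {poly {poly K}}: p`_j is the coefficient of v^j (a polynomial in u),
   and (p`_j)`_i is the coefficient of the monomial u^i v^j.
   The commutative ring k[u,v] uses the usual product of {poly {poly K}};
   the skew ring k_{-1}[u,v] uses the twisted product [skew_mul] below,
   determined by (u^i v^j)(u^a v^b) = (-1)^(j a) u^(i+a) v^(j+b),
   i.e. by the relation v u = - u v. *)

Section Defs.
Variable K : fieldType.

Definition var_u : {poly {poly K}} := ('X : {poly K})%:P.
Definition var_v : {poly {poly K}} := 'X.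

Definition cst (c : K) : {poly {poly K}} := (c%:P)%:P.

Definition skew_mul (p q : {poly {poly K}}) : {poly {poly K}} :=
  \sum_(j < size p) \sum_(b < size q)
     ((p`_j * (q`_b \Po ((-1) ^+ j *: 'X))) %:P * 'X^(j + b)).

Definition comm_mul (p q : {poly {poly K}}) : {poly {poly K}} := p * q.

Definition mpow (mul : {poly {poly K}} -> {poly {poly K}} -> {poly {poly K}})
  (x : {poly {poly K}}) (n : nat) : {poly {poly K}} := iter n (mul x) 1.

(* The matrix (a b; c d) acts by u |-> a u + c v, v |-> b u + d v, extended
   multiplicatively (w.r.t. the given product) and linearly:
   u^i v^j |-> (a u + c v)^i (b u + d v)^j. *)
Definition mat_act (mul : {poly {poly K}} -> {poly {poly K}} -> {poly {poly K}})
  (A : 'M[K]_2) (p : {poly {poly K}}) : {poly {poly K}} :=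
  let U := cst (A ord0 ord0) * var_u + cst (A ord_max ord0) * var_v in
  let V := cst (A ord0 ord_max) * var_u + cst (A ord_max ord_max) * var_v in
  \sum_(j < size p) \sum_(i < size p`_j)
     (cst (p`_j)`_i * mul (mpow mul U i) (mpow mul V j)).

Definition in_gen (S : seq 'M[K]_2) (g : 'M[K]_2) : Prop :=
  exists l : seq 'M[K]_2,
    all (fun h => h \in S ++ map invmx S) l /\ g = foldr mulmx 1%:M l.

(* generators of G_{n,k}, given omega a primitive (2nk)-th root of unity *)
Definition G_gens (n k : nat) (w : K) : seq 'M[K]_2 :=
  [:: \matrix_(i < 2, j < 2)
        (if i == j then (if i == ord0 then w ^+ (2 * k) else (w ^+ (2 * k))^-1)
         else 0);
      \matrix_(i < 2, j < 2) (if i == j then 0 else w ^+ n)].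

(* generator of 1/m(1,b), given zeta a primitive m-th root of unity *)
Definition cyc_gens (b : nat) (z : K) : seq 'M[K]_2 :=
  [:: \matrix_(i < 2, j < 2)
        (if i == j then (if i == ord0 then z else z ^+ b) else 0)].

Definition is_invariant (mul : {poly {poly K}} -> {poly {poly K}} -> {poly {poly K}})
  (S : seq 'M[K]_2) (p : {poly {poly K}}) : Prop :=
  forall g, in_gen S g -> mat_act mul g p = p.

Definition alg_iso_on
  (mul1 mul2 : {poly {poly K}} -> {poly {poly K}} -> {poly {poly K}})
  (P Q : {poly {poly K}} -> Prop) (f : {poly {poly K}} -> {poly {poly K}}) : Prop :=
  [/\ (forall p, P p -> Q (f p)),
      (forall q, Q q -> exists2 p, P p & f p = q),
      (forall p p', P p -> P p' -> f p = f p' -> p = p')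
    & [/\ (forall p p', P p -> P p' -> f (p + p') = f p + f p'),
      (forall p p', P p -> P p' -> f (mul1 p p') = mul2 (f p) (f p')),
      (forall (c : K) p, P p -> f (cst c * p) = cst c * f p)
    & f 1 = 1]].

End Defs.

From Pilot Require Import Defs.
From HB Require Import structures.
From mathcomp Require Import all_boot all_order all_algebra.
From mathcomp Require Import ring zify.
Set Implicit Arguments. Unset Strict Implicit. Unset Printing Implicit Defensive.
Import Order.TTheory GRing.Theory Num.Theory.
Local Open Scope ring_scope.

(* The group G_{1,k} is cyclic, generated by
   g : u |-> w v, v |-> w u, and its elements are the diagonal matrices
   w^n Id (n even) and the antidiagonal ones w^n [[0,1],[1,0]] (n odd).
   The isomorphism is a composite of two explicit maps:
   - the sign twist [theta], multiplying the coefficient of u^i v^j by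
     (-1)^C(j,2); on elements supported in even total degree (all invariants
     are, as k | i + j) it turns the skew product into the commutative one,
     and it turns G_{1,k}-invariance into invariance under the commutative
     swap u |-> a v, v |-> a u, where a = w^(2t+1) (so a^2 = -w^2);
   - the linear change of variables u |-> u + v, v |-> u - v (char K <> 2),
     which conjugates that swap into the diagonal map u |-> a u,
     v |-> -a v = a^(k+1) v, whose invariants are exactly those of 1/2k(1,k+1). *)

Section Coefficients.
Variable K : fieldType.
Notation PP := {poly {poly K}}.
Implicit Types p q : PP.

Definition coef2 (p : PP) (i j : nat) : K := (p`_j)`_i.

Definition mono (i j : nat) : PP := (@var_u K) ^+ i * (@var_v K) ^+ j.

Lemma coef2_inj p q : (forall i j, coef2 p i j = coef2 q i j) -> p = q.
Proof. by move=> H; apply/polyP => j; apply/polyP => i; exact: H. Qed.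

Lemma coef2D p q i j : coef2 (p + q) i j = coef2 p i j + coef2 q i j.
Proof. by rewrite /coef2 !coefD. Qed.

Lemma coef2_sum (I : Type) (r : seq I) (P : pred I) (F : I -> PP) i j :
  coef2 (\sum_(x <- r | P x) F x) i j = \sum_(x <- r | P x) coef2 (F x) i j.
Proof. by rewrite /coef2 !coef_sum. Qed.

Lemma coef2_cstM (c : K) p i j : coef2 (cst c * p) i j = c * coef2 p i j.
Proof. by rewrite /coef2 /cst coefCM coefCM. Qed.

Lemma monoE i j : mono i j = ('X^i)%:P * 'X^j.
Proof. by rewrite /mono /var_u /var_v rmorphXn. Qed.

Lemma mono_mul i j a b : mono i j * mono a b = mono (i + a) (j + b).
Proof. by rewrite /mono !exprD; ring. Qed.

Lemma coef2_cmono (c : K) a b i j :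
  coef2 (cst c * mono a b) i j = if (i == a) && (j == b) then c else 0.
Proof.
rewrite coef2_cstM /coef2 monoE coefMXn.
case: (ltngtP j b) => [ltjb|ltbj|->].
- by rewrite /= coef0 mulr0 andbF.
- by rewrite /= coefC subn_eq0 leqNgt ltbj andbF coef0 mulr0.
- by rewrite /= coefC subnn eqxx andbT coefXn; case: (i == a); rewrite ?mulr1 ?mulr0.
Qed.

Lemma coef2_out p i j :
  ~~ ((j < size p)%N && (i < size (p`_j)%R)%N) -> coef2 p i j = 0.
Proof.
rewrite negb_and -!leqNgt /coef2 => /orP [H|H].
  by rewrite nth_default // nth_default // size_poly0.
by rewrite nth_default.
Qed.

Lemma sum_delta (n x : nat) (F : nat -> K) :
  \sum_(i < n) (if x == i then F i else 0) = if (x < n)%N then F x else 0.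
Proof.
case: ltnP => Hx.
  rewrite (bigD1 (Ordinal Hx)) //= eqxx big1 ?addr0 // => i /= Hi.
  by case: eqP => // Exi; case/eqP: Hi; apply/val_inj => /=.
by rewrite big1 // => i _; case: eqP => // Exi; move: (ltn_ord i); rewrite -Exi ltnNge Hx.
Qed.

Lemma sum2_delta (n x y : nat) (m : nat -> nat) (F : nat -> nat -> K) :
  \sum_(j < n) \sum_(i < m j) (if (x == i) && (y == j) then F i j else 0)
  = if (y < n)%N && (x < m y)%N then F x y else 0.
Proof.
transitivity (\sum_(j < n) (if y == j then (if (x < m y)%N then F x y else 0) else 0)).
  apply: eq_bigr => j _; case: (y =P j) => [->|_].
    by rewrite -(sum_delta _ _ (F^~ j)); apply: eq_bigr => i _; rewrite ?eqxx andbT.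
  by rewrite big1 // => i _; rewrite andbF.
by rewrite (sum_delta n y (fun _ => if (x < m y)%N then F x y else 0)); case: (y < n)%N.
Qed.

Lemma coef2_sum_mono p (lam : nat -> nat -> K) x y :
  coef2 (\sum_(j < size p) \sum_(i < size (p`_j)%R)
           cst (coef2 p i j * lam i j) * mono i j) x y
  = coef2 p x y * lam x y.
Proof.
rewrite coef2_sum; under eq_bigr => j _ do rewrite coef2_sum;
  under eq_bigr => j _ do under eq_bigr => i _ do rewrite coef2_cmono.
rewrite (sum2_delta (size p) x y (fun j => size (p`_j)%R)
           (fun i j => coef2 p i j * lam i j)).
by case: ifPn => // H; rewrite coef2_out // mul0r.
Qed.

Lemma coef2_sum_mono_swap p (lam : nat -> nat -> K) x y :
  coef2 (\sum_(j < size p) \sum_(i < size (p`_j)%R)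
           cst (coef2 p i j * lam i j) * mono j i) x y
  = coef2 p y x * lam y x.
Proof.
rewrite coef2_sum; under eq_bigr => j _ do rewrite coef2_sum;
  under eq_bigr => j _ do under eq_bigr => i _ do rewrite coef2_cmono.
rewrite (eq_bigr (fun j : 'I_(size p) => \sum_(i < size (p`_j)%R)
   (if (y == i) && (x == j) then coef2 p i j * lam i j else 0))); last first.
  by move=> j _; apply: eq_bigr => i _; rewrite andbC.
rewrite (sum2_delta (size p) y x (fun j => size (p`_j)%R)
           (fun i j => coef2 p i j * lam i j)).
by case: ifPn => // H; rewrite coef2_out // mul0r.
Qed.

Lemma mono_decomp p :
  p = \sum_(j < size p) \sum_(i < size (p`_j)%R) cst (coef2 p i j) * mono i j.
Proof.
apply: coef2_inj => x y.
rewrite -(mulr1 (coef2 p x y)) -(coef2_sum_mono p (fun _ _ => 1)).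
by congr coef2; apply: eq_bigr => j _; apply: eq_bigr => i _; rewrite mulr1.
Qed.

Definition cst_rmorph : {rmorphism K -> PP} := (@polyC {poly K} \o @polyC K).

Lemma cstM (a b : K) : cst (a * b) = cst a * cst b.
Proof. exact: (rmorphM cst_rmorph). Qed.
Lemma cstX (a : K) n : cst (a ^+ n) = cst a ^+ n.
Proof. exact: (rmorphXn cst_rmorph). Qed.
Lemma cst1 : cst (1 : K) = 1.
Proof. exact: (rmorph1 cst_rmorph). Qed.
Lemma cst0 : cst (0 : K) = 0.
Proof. exact: (rmorph0 cst_rmorph). Qed.
Lemma cstN (a : K) : cst (- a) = - cst a.
Proof. exact: (rmorphN cst_rmorph). Qed.

End Coefficients.
Arguments mono {K} i j.
Arguments var_u {K}.
Arguments var_v {K}.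

Section Substitution.
Variable K : fieldType.
Notation PP := {poly {poly K}}.
Implicit Types p q : PP.

Lemma cst_comm (U : PP) : commr_rmorph (@cst_rmorph K) U.
Proof. by move=> a; apply: mulrC. Qed.

Definition subs_u_rmorph (U : PP) : {rmorphism {poly K} -> PP} :=
  horner_morph (cst_comm U).

Lemma subs_u_comm (U V : PP) : commr_rmorph (subs_u_rmorph U) V.
Proof. by move=> a; apply: mulrC. Qed.

Definition subs_rmorph (U V : PP) : {rmorphism PP -> PP} :=
  horner_morph (subs_u_comm U V).
Definition subs (U V : PP) (q : PP) : PP := subs_rmorph U V q.

Lemma subs_cst U V c : subs U V (cst c) = cst c.
Proof.
apply: etrans (horner_morphC (subs_u_comm U V) (c%:P)) _.
exact: (horner_morphC (cst_comm U) c).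
Qed.

Lemma subs_u U V : subs U V var_u = U.
Proof.
apply: etrans (horner_morphC (subs_u_comm U V) 'X) _.
exact: (horner_morphX (cst_comm U)).
Qed.

Lemma subs_v U V : subs U V var_v = V.
Proof. exact: (horner_morphX (subs_u_comm U V)). Qed.

Lemma subs0 U V : subs U V 0 = 0. Proof. exact: rmorph0. Qed.
Lemma subs1 U V : subs U V 1 = 1. Proof. exact: rmorph1. Qed.
Lemma subsD U V p q : subs U V (p + q) = subs U V p + subs U V q.
Proof. exact: rmorphD. Qed.
Lemma subsB U V p q : subs U V (p - q) = subs U V p - subs U V q.
Proof. exact: rmorphB. Qed.
Lemma subsM U V p q : subs U V (p * q) = subs U V p * subs U V q.
Proof. exact: rmorphM. Qed.
Lemma subsX U V p n : subs U V (p ^+ n) = subs U V p ^+ n.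
Proof. exact: rmorphXn. Qed.
Lemma subs_sum U V (I : Type) (r : seq I) (P : pred I) (F : I -> PP) :
  subs U V (\sum_(x <- r | P x) F x) = \sum_(x <- r | P x) subs U V (F x).
Proof. exact: rmorph_sum. Qed.
Lemma subs_cstM U V c q : subs U V (cst c * q) = cst c * subs U V q.
Proof. by rewrite subsM subs_cst. Qed.

Lemma subs_decomp U V q :
  subs U V q = \sum_(j < size q) \sum_(i < size (q`_j)%R)
                  cst (coef2 q i j) * (U ^+ i * V ^+ j).
Proof.
rewrite {1}(mono_decomp q) subs_sum; apply: eq_bigr => j _.
rewrite subs_sum; apply: eq_bigr => i _.
by rewrite subs_cstM /mono subsM !subsX subs_u subs_v.
Qed.

Lemma subs_comp U V U' V' q :
  subs U V (subs U' V' q) = subs (subs U V U') (subs U V V') q.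
Proof.
rewrite [subs U' V' q]subs_decomp [RHS]subs_decomp subs_sum; apply: eq_bigr => j _.
rewrite subs_sum; apply: eq_bigr => i _.
by rewrite subs_cstM subsM !subsX.
Qed.

Lemma subs_id q : subs var_u var_v q = q.
Proof. by rewrite subs_decomp [RHS]mono_decomp. Qed.

Lemma coef2_subs_diag (a b : K) q x y :
  coef2 (subs (cst a * var_u) (cst b * var_v) q) x y
  = coef2 q x y * (a ^+ x * b ^+ y).
Proof.
rewrite subs_decomp -(coef2_sum_mono q (fun i j => a ^+ i * b ^+ j)); congr coef2.
apply: eq_bigr => j _; apply: eq_bigr => i _.
rewrite !exprMn /mono !cstM !cstX; ring.
Qed.

Lemma coef2_subs_swap (a b : K) q x y :
  coef2 (subs (cst a * var_v) (cst b * var_u) q) x y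
  = coef2 q y x * (a ^+ y * b ^+ x).
Proof.
rewrite subs_decomp -(coef2_sum_mono_swap q (fun i j => a ^+ i * b ^+ j)).
congr coef2; apply: eq_bigr => j _; apply: eq_bigr => i _.
rewrite !exprMn /mono !cstM !cstX; ring.
Qed.

End Substitution.

(* The skew product of Defs is p * q = sum_j p`_j v^j q((-1)^j u, v): moving
   v^j to the right of q changes u into (-1)^j u.  It is biadditive, and on
   monomials (c u^i v^j)(d u^a v^b) = c d (-1)^(j a) u^(i+a) v^(j+b). *)
Section SkewProduct.
Variable K : fieldType.
Notation PP := {poly {poly K}}.
Implicit Types p q : PP.

Lemma coef_comp_scaleX (r : {poly K}) (c : K) x :
  (r \Po (c *: 'X))`_x = c ^+ x * r`_x.
Proof.
rewrite comp_polyE coef_sum.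
under eq_bigr => i _ do rewrite exprZn !coefZ coefXn.
rewrite (eq_bigr (fun i : 'I_(size r) => if x == i then r`_i * c ^+ i else 0)); last first.
  by move=> i _; rewrite eq_sym; case: eqP => [->|_]; rewrite ?mulr1 ?mulr0 // mulrC.
rewrite (sum_delta (size r) x (fun i => r`_i * c ^+ i)).
by case: ltnP => H; [rewrite mulrC | rewrite nth_default // mulr0].
Qed.

Definition sign_u (j : nat) : PP -> PP := subs (cst ((-1) ^+ j) * var_u) var_v.

Lemma skew_mulE p q :
  skew_mul p q = \sum_(j < size p) ((p`_j)%:P * 'X^j) * sign_u j q.
Proof.
rewrite /skew_mul; apply: eq_bigr => j _.
have -> : sign_u j q = \sum_(b < size q) ((q`_b \Po ((-1) ^+ j *: 'X)))%:P * 'X^b.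
  apply: coef2_inj => x y.
  rewrite /sign_u -[var_v]mul1r -cst1 coef2_subs_diag coef2_sum.
  under eq_bigr => b _ do rewrite /coef2 coefMXn coefC.
  have Hif : forall (b : nat) (R : {poly K}),
      (if (y < b)%N then 0 else if (y - b == 0)%N then R else 0)`_x
      = if y == b then R`_x else 0.
    move=> b R; case: (ltngtP y b) => H.
    - by rewrite coef0.
    - by rewrite subn_eq0 leqNgt H coef0.
    - by rewrite H subnn eqxx.
  under eq_bigr => b _ do rewrite Hif.
  rewrite (sum_delta (size q) y (fun b => (q`_b \Po ((-1) ^+ j *: 'X))`_x)).
  rewrite expr1n mulr1 /coef2.
  case: ltnP => H; first by rewrite coef_comp_scaleX -exprM mulrC exprM.
  have -> : q`_y = 0 by rewrite nth_default.
  by rewrite coef0 mul0r.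
rewrite mulr_sumr; apply: eq_bigr => b _.
by rewrite rmorphM exprD; ring.
Qed.

Lemma skew_mulW N p q : (size p <= N)%N ->
  skew_mul p q = \sum_(j < N) ((p`_j)%:P * 'X^j) * sign_u j q.
Proof.
move=> H; rewrite skew_mulE (big_ord_widen N (fun j => ((p`_j)%:P * 'X^j) * sign_u j q) H).
rewrite big_mkcond; apply: eq_bigr => j _; case: ltnP => // Hj.
by rewrite nth_default // !mul0r.
Qed.

Lemma skew_mulDl p1 p2 q : skew_mul (p1 + p2) q = skew_mul p1 q + skew_mul p2 q.
Proof.
set N := (size p1 + size p2)%N.
have H1 : (size p1 <= N)%N by rewrite leq_addr.
have H2 : (size p2 <= N)%N by rewrite leq_addl.
have H3 : (size (p1 + p2)%R <= N)%N.
  by apply: leq_trans (size_polyD _ _) _; rewrite geq_max H1 H2.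
rewrite (skew_mulW q H1) (skew_mulW q H2) (skew_mulW q H3) -big_split.
by apply: eq_bigr => j _; rewrite coefD rmorphD /= !mulrDl.
Qed.

Lemma skew_mul0l q : skew_mul 0 q = 0.
Proof. by rewrite skew_mulE size_poly0 big_ord0. Qed.

Lemma skew_mulDr p q1 q2 : skew_mul p (q1 + q2) = skew_mul p q1 + skew_mul p q2.
Proof. by rewrite !skew_mulE -big_split; apply: eq_bigr => j _; rewrite /sign_u subsD mulrDr. Qed.

Lemma skew_mul0r p : skew_mul p 0 = 0.
Proof. by rewrite skew_mulE big1 // => j _; rewrite /sign_u subs0 mulr0. Qed.

Lemma skew_mul_suml (I : Type) (r : seq I) (P : pred I) (F : I -> PP) q :
  skew_mul (\sum_(x <- r | P x) F x) q = \sum_(x <- r | P x) skew_mul (F x) q.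
Proof. exact: (big_morph (fun p => skew_mul p q) (fun a b => skew_mulDl a b q) (skew_mul0l q)). Qed.

Lemma skew_mul_sumr (I : Type) (r : seq I) (P : pred I) (F : I -> PP) p :
  skew_mul p (\sum_(x <- r | P x) F x) = \sum_(x <- r | P x) skew_mul p (F x).
Proof. exact: (big_morph (skew_mul p) (skew_mulDr p) (skew_mul0r p)). Qed.

Lemma coef_cmono (c : K) i j m :
  (cst c * mono i j)`_m = if m == j then c%:P * 'X^i else 0.
Proof.
rewrite monoE /cst mulrA -rmorphM /= coefMXn coefC.
case: (ltngtP m j) => H //.
- by rewrite subn_eq0 leqNgt H.
- by rewrite H subnn eqxx.
Qed.

Lemma size_cmono (c : K) i j : (size (cst c * mono i j)%R <= j.+1)%N.
Proof.
apply/leq_sizeP => m Hm; rewrite coef_cmono.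
by case: eqP => // E; move: Hm; rewrite E ltnn.
Qed.

Lemma skew_mul_mono (c d : K) i j a b :
  skew_mul (cst c * mono i j) (cst d * mono a b)
  = cst (c * d * (-1) ^+ (j * a)) * mono (i + a) (j + b).
Proof.
rewrite (skew_mulW _ (size_cmono c i j)) big_ord_recr /= big1; last first.
  by move=> m _; rewrite coef_cmono (ltn_eqF (ltn_ord m)) !mul0r.
rewrite add0r coef_cmono eqxx /sign_u subs_cstM /mono subsM !subsX subs_u subs_v.
rewrite !cstM !cstX exprM /var_u /var_v rmorphM rmorphXn /= -/(cst c) exprMn exprD exprD.
rewrite -!cstX.
ring.
Qed.

Lemma mpow_skew_v (c : K) n :
  mpow (@skew_mul K) (cst c * var_v) n = cst (c ^+ n) * mono 0 n.
Proof.
elim: n => [|n IH]; first by rewrite /mpow /= expr0 cst1 /mono !expr0 mulr1 mul1r.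
rewrite /mpow /= -/(mpow _ _ n) IH.
have -> : cst c * var_v = cst c * mono 0 1 by rewrite /mono expr0 mul1r expr1.
by rewrite skew_mul_mono muln0 expr0 mulr1 -exprS.
Qed.

Lemma mpow_skew_u (c : K) n :
  mpow (@skew_mul K) (cst c * var_u) n = cst (c ^+ n) * mono n 0.
Proof.
elim: n => [|n IH]; first by rewrite /mpow /= expr0 cst1 /mono !expr0 mulr1 mul1r.
rewrite /mpow /= -/(mpow _ _ n) IH.
have -> : cst c * var_u = cst c * mono 1 0 by rewrite /mono expr0 mulr1 expr1.
by rewrite skew_mul_mono mul0n expr0 mulr1 -exprS.
Qed.

End SkewProduct.

Lemma binom2D j b : 'C(j + b, 2) = ('C(j, 2) + 'C(b, 2) + j * b)%N.
Proof.
elim: b => [|b IH]; first by rewrite addn0 bin0n muln0 !addn0.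
by rewrite addnS !binS !bin1 IH; lia.
Qed.

(* If x + y = 2 s then C(x,2) + s and C(y,2) + x y have the same parity;
   this is the sign bookkeeping behind the twist of swap-type maps. *)
Lemma binom2_half_parity (x y s : nat) : (x + y = 2 * s)%N ->
  odd ('C(x, 2) + s) = odd ('C(y, 2) + y * x).
Proof.
move=> Hs.
have H2 : 'C(s + s, 2) = ('C(s, 2) + 'C(s, 2) + s * s)%N by apply: binom2D.
have Hss : (s + s = x + y)%N by lia.
rewrite Hss binom2D in H2.
have : odd ('C(x, 2) + 'C(y, 2) + x * y) = odd ('C(s, 2) + 'C(s, 2) + s * s) by rewrite H2.
rewrite !oddD !oddM.
by case: (odd 'C(x,2)); case: (odd 'C(y,2)); case: (odd x); case: (odd y);
   case: (odd s); case: (odd 'C(s,2)).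
Qed.

Section SignTwist.
Variable K : fieldType.
Notation PP := {poly {poly K}}.
Implicit Types p q : PP.

Definition sgn2 (j : nat) : K := (-1) ^+ 'C(j, 2).

Definition theta (p : PP) : PP := \poly_(j < size p) (sgn2 j *: p`_j).

Lemma coef2_theta p x y : coef2 (theta p) x y = coef2 p x y * sgn2 y.
Proof.
rewrite /coef2 /theta coef_poly; case: ltnP => H; first by rewrite coefZ mulrC.
by rewrite coef0 [p`_y]nth_default // coef0 mul0r.
Qed.

Lemma theta_decomp p :
  theta p = \sum_(j < size p) \sum_(i < size (p`_j)%R)
              cst (coef2 p i j * sgn2 j) * mono i j.
Proof. by apply: coef2_inj => x y; rewrite coef2_theta (coef2_sum_mono p (fun _ j => sgn2 j)). Qed.

Lemma thetaD p q : theta (p + q) = theta p + theta q.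
Proof. by apply: coef2_inj => x y; rewrite coef2D !coef2_theta coef2D mulrDl. Qed.

Lemma theta0 : theta 0 = 0.
Proof. by apply: coef2_inj => x y; rewrite coef2_theta /coef2 !coef0 mul0r. Qed.

Lemma theta_sum (I : Type) (r : seq I) (P : pred I) (F : I -> PP) :
  theta (\sum_(x <- r | P x) F x) = \sum_(x <- r | P x) theta (F x).
Proof. exact: (big_morph theta thetaD theta0). Qed.

Lemma theta_cstM (c : K) p : theta (cst c * p) = cst c * theta p.
Proof. by apply: coef2_inj => x y; rewrite coef2_theta !coef2_cstM coef2_theta mulrA. Qed.

Lemma theta_cmono (c : K) i j : theta (cst c * mono i j) = cst (c * sgn2 j) * mono i j.
Proof.
apply: coef2_inj => x y; rewrite coef2_theta !coef2_cmono.
by case: (x == i); case: (y =P j) => [->|_]; rewrite ?mul0r.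
Qed.

Lemma thetaK p : theta (theta p) = p.
Proof.
apply: coef2_inj => x y; rewrite !coef2_theta -mulrA /sgn2 -exprD.
by rewrite -signr_odd addnn odd_double expr0 mulr1.
Qed.

Lemma theta1 : theta 1 = 1.
Proof.
have -> : (1 : PP) = cst 1 * mono 0 0 by rewrite cst1 /mono !expr0 !mulr1.
by rewrite theta_cmono /sgn2 bin0n expr0 mulr1.
Qed.

Definition even_supp (p : PP) := forall x y, coef2 p x y != 0 -> ~~ odd (x + y).

Lemma sgn2_mul (j a b : nat) : ~~ odd (a + b) ->
  (-1) ^+ (j * a) * sgn2 (j + b) = sgn2 j * sgn2 b.
Proof.
move=> Hab; rewrite /sgn2 binom2D -!exprD -signr_odd -[RHS]signr_odd.
congr (_ ^+ _); move: Hab; rewrite !oddD !oddM.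
by case: (odd a); case: (odd b); case: (odd j); case: (odd 'C(j, 2)); case: (odd 'C(b, 2)).
Qed.

Lemma theta_skew_mul p q : even_supp p -> even_supp q ->
  theta (skew_mul p q) = theta p * theta q.
Proof.
move=> Ep Eq.
rewrite {1}(mono_decomp p) {1}(mono_decomp q) (theta_decomp p) (theta_decomp q).
rewrite skew_mul_suml theta_sum mulr_suml; apply: eq_bigr => j _.
rewrite skew_mul_suml theta_sum mulr_suml; apply: eq_bigr => i _.
rewrite skew_mul_sumr theta_sum mulr_sumr; apply: eq_bigr => b _.
rewrite skew_mul_sumr theta_sum mulr_sumr; apply: eq_bigr => a _.
rewrite skew_mul_mono theta_cmono.
have -> : cst (coef2 p i j * sgn2 j) * mono i j * (cst (coef2 q a b * sgn2 b) * mono a b)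
  = cst (coef2 p i j * sgn2 j * (coef2 q a b * sgn2 b)) * mono (i + a) (j + b).
  by rewrite cstM -mono_mul; ring.
congr (cst _ * _).
have [c0|cn0] := eqVneq (coef2 q a b) 0; first by rewrite c0 mulr0 !mul0r mulr0.
by rewrite -mulrA sgn2_mul ?Eq //; ring.
Qed.

Lemma sgn2_half (x y s : nat) : (x + y = 2 * s)%N ->
  sgn2 x * (-1) ^+ s = (-1) ^+ (y * x) * sgn2 y.
Proof.
move=> H; rewrite /sgn2 -!exprD -[LHS]signr_odd (binom2_half_parity H).
by rewrite addnC signr_odd.
Qed.

End SignTwist.

Section Actions.
Variable K : fieldType.
Notation PP := {poly {poly K}}.
Implicit Types p q : PP.

Lemma mpow_comm (x : PP) n : mpow (@comm_mul K) x n = x ^+ n.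
Proof. by elim: n => [|n IH] //=; rewrite /mpow /= -/(mpow _ x n) IH exprS. Qed.

Lemma mat_act_commE (A : 'M[K]_2) q :
  mat_act (@comm_mul K) A q =
  subs (cst (A ord0 ord0) * var_u + cst (A ord_max ord0) * var_v)
       (cst (A ord0 ord_max) * var_u + cst (A ord_max ord_max) * var_v) q.
Proof.
rewrite subs_decomp /mat_act; apply: eq_bigr => j _; apply: eq_bigr => i _.
by rewrite /comm_mul !mpow_comm.
Qed.

Lemma coef2_act_skew_antidiag (A : 'M[K]_2) p x y :
  A ord0 ord0 = 0 -> A ord_max ord_max = 0 ->
  coef2 (mat_act (@skew_mul K) A p) x y
  = coef2 p y x * (A ord_max ord0 ^+ y * A ord0 ord_max ^+ x * (-1) ^+ (y * x)).
Proof.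
move=> H00 H11; rewrite /mat_act H00 H11 cst0 !mul0r add0r addr0.
rewrite -(coef2_sum_mono_swap p
  (fun i j => A ord_max ord0 ^+ i * A ord0 ord_max ^+ j * (-1) ^+ (i * j))).
congr coef2; apply: eq_bigr => j _; apply: eq_bigr => i _.
by rewrite mpow_skew_v mpow_skew_u skew_mul_mono add0n addn0 !cstM -/(coef2 p i j); ring.
Qed.

Lemma coef2_act_skew_diag (A : 'M[K]_2) p x y :
  A ord_max ord0 = 0 -> A ord0 ord_max = 0 ->
  coef2 (mat_act (@skew_mul K) A p) x y
  = coef2 p x y * (A ord0 ord0 ^+ x * A ord_max ord_max ^+ y).
Proof.
move=> H10 H01; rewrite /mat_act H10 H01 cst0 !mul0r add0r addr0.
rewrite -(coef2_sum_mono p (fun i j => A ord0 ord0 ^+ i * A ord_max ord_max ^+ j)).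
congr coef2; apply: eq_bigr => j _; apply: eq_bigr => i _.
rewrite mpow_skew_v mpow_skew_u skew_mul_mono addn0 add0n muln0 expr0 mulr1.
by rewrite !cstM -/(coef2 p i j); ring.
Qed.

Lemma ord2P (i : 'I_2) : i = ord0 \/ i = ord_max.
Proof. by case: i => [[|[|m]] H]; [left|right|]; rewrite //; apply: val_inj. Qed.

Definition Gmx (b : K) (s : bool) : 'M[K]_2 :=
  \matrix_(i < 2, j < 2) (if (i == j) != s then b else 0).

Definition diag2 (a b : K) : 'M[K]_2 :=
  \matrix_(i < 2, j < 2) (if i == j then (if i == ord0 then a else b) else 0).

Lemma mul2E (A B : 'M[K]_2) i j :
  (A *m B) i j = A i ord0 * B ord0 j + A i ord_max * B ord_max j.
Proof.
rewrite mxE big_ord_recr big_ord_recr big_ord0 /= add0r.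
by have -> : widen_ord (leqnSn 1) ord_max = ord0 :> 'I_2 by apply: val_inj.
Qed.

Lemma Gmx_mul b c s t : Gmx b s *m Gmx c t = Gmx (b * c) (s (+) t).
Proof.
apply/matrixP => i j; rewrite mul2E !mxE.
by case: (ord2P i) => ->; case: (ord2P j) => ->; case: s; case: t => /=;
  rewrite ?mulr0 ?mul0r ?addr0 ?add0r.
Qed.

Lemma diag2_mul a b c d : diag2 a b *m diag2 c d = diag2 (a * c) (b * d).
Proof.
apply/matrixP => i j; rewrite mul2E !mxE.
by case: (ord2P i) => ->; case: (ord2P j) => -> /=; rewrite ?mulr0 ?mul0r ?addr0 ?add0r.
Qed.

Lemma Gmx1 : Gmx 1 false = 1%:M.
Proof. by apply/matrixP => i j; rewrite !mxE; case: (ord2P i) => ->; case: (ord2P j) => ->. Qed.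

Lemma diag2_1 : diag2 1 1 = 1%:M.
Proof. by apply/matrixP => i j; rewrite !mxE; case: (ord2P i) => ->; case: (ord2P j) => ->. Qed.

Lemma coef2_act_Gmx (b : K) (s : bool) p x y :
  coef2 (mat_act (@skew_mul K) (Gmx b s) p) x y =
  if s then coef2 p y x * (b ^+ y * b ^+ x * (-1) ^+ (y * x))
  else coef2 p x y * (b ^+ x * b ^+ y).
Proof.
by case: s; [rewrite coef2_act_skew_antidiag ?mxE | rewrite coef2_act_skew_diag ?mxE].
Qed.

Lemma mat_act_diag2 (a b : K) q :
  mat_act (@comm_mul K) (diag2 a b) q = subs (cst a * var_u) (cst b * var_v) q.
Proof. by rewrite mat_act_commE !mxE /= cst0 !mul0r addr0 add0r. Qed.

Lemma invmx_right n (A B : 'M[K]_n) : A *m B = 1%:M -> invmx A = B.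
Proof.
move=> AB; have [uA _] := mulmx1_unit AB.
by rewrite -(mulKmx uA B) AB mulmx1.
Qed.

Lemma in_gen_ind (S : seq 'M[K]_2) (P : 'M[K]_2 -> Prop) :
  P 1%:M -> (forall h g, h \in S ++ map invmx S -> P g -> P (h *m g)) ->
  forall g, in_gen S g -> P g.
Proof.
move=> P1 PM g [l [Hl ->]].
by elim: l Hl => [|h l IH] //= /andP [Hh Hl]; apply: PM => //; apply: IH.
Qed.

Lemma in_gen_G1k (k : nat) (w : K) (hw : (2 * k).-primitive_root w) g :
  in_gen (G_gens 1 k w) g -> exists n, g = Gmx (w ^+ n) (odd n).
Proof.
have w2k : w ^+ (2 * k) = 1 := prim_expr_order hw.
have k0 : (0 < 2 * k)%N := prim_order_gt0 hw.
have Hd0 : \matrix_(i < 2, j < 2) (if i == j then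
      (if i == ord0 then w ^+ (2 * k) else (w ^+ (2 * k))^-1) else 0) = 1%:M.
  apply/matrixP => i j; rewrite !mxE w2k invr1.
  by case: (ord2P i) => ->; case: (ord2P j) => ->.
have Hg1 : \matrix_(i < 2, j < 2) (if i == j then 0 else w ^+ 1) = Gmx (w ^+ 1) (odd 1).
  by apply/matrixP => i j; rewrite !mxE; case: (ord2P i) => ->; case: (ord2P j) => ->.
have Hinv : invmx (Gmx (w ^+ 1) (odd 1)) = Gmx (w ^+ (2 * k).-1) (odd (2 * k).-1).
  apply: invmx_right; rewrite Gmx_mul -exprD.
  have -> : (1 + (2 * k).-1 = 2 * k)%N by lia.
  have -> : odd 1 (+) odd (2 * k).-1 = false.
    have -> : (2 * k).-1 = (2 * k.-1).+1 by lia.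
    by rewrite !oddS oddM.
  by rewrite w2k Gmx1.
move: g; apply: (in_gen_ind (P := fun g => exists n, g = Gmx (w ^+ n) (odd n))).
  by exists 0%N; rewrite expr0 Gmx1.
move=> h _ Hh [n ->].
have [m ->] : exists m, h = Gmx (w ^+ m) (odd m).
  move: Hh; rewrite /G_gens /= !inE => /or4P [] /eqP ->.
  - by exists 0%N; rewrite Hd0 expr0 Gmx1.
  - by exists 1%N; rewrite Hg1.
  - by exists 0%N; rewrite Hd0 expr0 invmx1 Gmx1.
  - by exists (2 * k).-1; rewrite Hg1 Hinv.
by exists (m + n)%N; rewrite Gmx_mul exprD oddD.
Qed.

Lemma in_gen_cyc (k : nat) (z : K) (hz : (2 * k).-primitive_root z) g :
  in_gen (cyc_gens (k + 1) z) g -> exists n, g = diag2 (z ^+ n) (z ^+ (k + 1) ^+ n).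
Proof.
have z2k : z ^+ (2 * k) = 1 := prim_expr_order hz.
have k0 : (0 < 2 * k)%N := prim_order_gt0 hz.
have Hg : \matrix_(i < 2, j < 2) (if i == j then (if i == ord0 then z else z ^+ (k + 1)) else 0)
        = diag2 (z ^+ 1) (z ^+ (k + 1) ^+ 1) by apply/matrixP => i j; rewrite !mxE.
have Hinv : invmx (diag2 (z ^+ 1) (z ^+ (k + 1) ^+ 1))
          = diag2 (z ^+ (2 * k).-1) (z ^+ (k + 1) ^+ (2 * k).-1).
  apply: invmx_right; rewrite diag2_mul -!exprD.
  have -> : (1 + (2 * k).-1 = 2 * k)%N by lia.
  by rewrite z2k -exprM mulnC exprM z2k expr1n diag2_1.
move: g; apply: (in_gen_ind
  (P := fun g => exists n, g = diag2 (z ^+ n) (z ^+ (k + 1) ^+ n))).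
  by exists 0%N; rewrite !expr0 diag2_1.
move=> h _ Hh [n ->].
have [m ->] : exists m, h = diag2 (z ^+ m) (z ^+ (k + 1) ^+ m).
  move: Hh; rewrite /cyc_gens /= !inE => /orP [] /eqP ->.
  - by exists 1%N; rewrite Hg.
  - by exists (2 * k).-1; rewrite Hg Hinv.
by exists (m + n)%N; rewrite diag2_mul !exprD.
Qed.

End Actions.

Lemma prim_root_half (K : fieldType) (k : nat) (w : K) :
  (0 < k)%N -> (2 * k).-primitive_root w -> w ^+ k = -1.
Proof.
move=> hk hw; have : (w ^+ k) ^+ 2 == 1 by rewrite -exprM mulnC prim_expr_order.
rewrite sqrf_eq1 => /orP [/eqP H|/eqP //].
have := prim_order_dvd hw k; rewrite H eqxx => Hd.
by have := dvdn_leq hk Hd; lia.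
Qed.

Section Roots.
Variable K : fieldType.
Variables k t : nat.
Hypothesis Hkt : k = (t * 4)%N.
Hypothesis hk : (0 < k)%N.
Variable w : K.
Hypothesis hw : (2 * k).-primitive_root w.

Definition alpha : K := w ^+ (2 * t + 1).

Lemma alpha_prim : (2 * k).-primitive_root alpha.
Proof.
rewrite /alpha prim_root_exp_coprime // Hkt.
have -> : (2 * (t * 4) = 8 * t)%N by lia.
rewrite coprimeMr; apply/andP; split.
  have -> : (8 = 2 * 2 * 2)%N by [].
  by rewrite !coprimeMr coprimen2 addn1 /= oddM.
by rewrite coprime_sym /coprime gcdnMDl gcdn1.
Qed.

Lemma alpha_opp : - alpha = alpha ^+ (k + 1).
Proof. by rewrite exprD (prim_root_half hk alpha_prim) expr1 mulN1r. Qed.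

Lemma alpha_even (s : nat) : alpha ^+ (2 * s) = (-1) ^+ s * w ^+ (2 * s).
Proof.
have alpha_sqr : alpha ^+ 2 = - w ^+ 2.
  rewrite /alpha -exprM.
  have -> : ((2 * t + 1) * 2 = k + 2)%N by rewrite Hkt; lia.
  by rewrite exprD (prim_root_half hk hw) mulN1r.
by rewrite !exprM alpha_sqr -[- w ^+ 2]mulN1r exprMn.
Qed.

End Roots.

Section ChangeOfVariables.
Variable K : fieldType.
Notation PP := {poly {poly K}}.
Hypothesis two_nz : (2%:R : K) != 0.
Variable a : K.

Definition lin_uv : PP -> PP := subs (var_u + var_v) (var_u - var_v).
Definition lin_uv_inv : PP -> PP :=
  subs (cst (2%:R^-1) * (var_u + var_v)) (cst (2%:R^-1) * (var_u - var_v)).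
Definition swap_by : PP -> PP := subs (cst a * var_v) (cst a * var_u).
Definition diag_by : PP -> PP := subs (cst a * var_u) (cst (- a) * var_v).

Lemma cst_half2 : cst (2%:R^-1 : K) * 2%:R = 1.
Proof.
have -> : (2%:R : PP) = cst 2%:R by rewrite /cst !rmorph_nat.
by rewrite -cstM mulVf // cst1.
Qed.

Lemma lin_uvK q : lin_uv (lin_uv_inv q) = q.
Proof.
rewrite /lin_uv /lin_uv_inv subs_comp !subs_cstM subsD subsB !subs_u !subs_v -[RHS]subs_id.
congr subs.
  have -> : var_u + var_v + (var_u - var_v) = (2%:R : PP) * var_u by ring.
  by rewrite mulrA cst_half2 mul1r.
have -> : var_u + var_v - (var_u - var_v) = (2%:R : PP) * var_v by ring.
by rewrite mulrA cst_half2 mul1r.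
Qed.

Lemma lin_uv_invK q : lin_uv_inv (lin_uv q) = q.
Proof.
rewrite /lin_uv /lin_uv_inv subs_comp subsD subsB !subs_u !subs_v -[RHS]subs_id.
congr subs.
  have -> : cst 2%:R^-1 * (var_u + var_v) + cst 2%:R^-1 * (var_u - var_v)
     = cst 2%:R^-1 * 2%:R * (var_u : PP) by ring.
  by rewrite cst_half2 mul1r.
have -> : cst 2%:R^-1 * (var_u + var_v) - cst 2%:R^-1 * (var_u - var_v)
     = cst 2%:R^-1 * 2%:R * (var_v : PP) by ring.
by rewrite cst_half2 mul1r.
Qed.

Lemma lin_uv_swap q : lin_uv (swap_by q) = diag_by (lin_uv q).
Proof.
rewrite /lin_uv /swap_by /diag_by !subs_comp !subs_cstM subsD subsB !subs_u !subs_v.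
by congr subs; rewrite cstN; ring.
Qed.

Lemma lin_uv_inv_diag q : lin_uv_inv (diag_by q) = swap_by (lin_uv_inv q).
Proof. by rewrite -{1}(lin_uvK q) -lin_uv_swap lin_uv_invK. Qed.

End ChangeOfVariables.

(* Coefficient descriptions of the two invariant rings: p is G_{1,k}-invariant
   iff c_xy = w^(x+y) (-1)^(xy) c_yx and c_xy = 0 unless k | x + y; q is
   1/2k(1,k+1)-invariant iff c_xy = 0 unless 2k | x + (k+1) y. *)
Section Invariants.
Variable K : fieldType.
Notation PP := {poly {poly K}}.
Variable k : nat.

Definition skew_coef (w : K) (p : PP) :=
  (forall x y, coef2 p x y = coef2 p y x * (w ^+ y * w ^+ x * (-1) ^+ (y * x))) /\
  (forall x y, coef2 p x y != 0 -> (k %| x + y)%N).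

Definition cyc_coef (q : PP) :=
  forall x y, coef2 q x y != 0 -> (2 * k %| x + (k + 1) * y)%N.

Lemma cyc_coef_fixed (b : K) q : b ^+ (2 * k) = 1 -> cyc_coef q ->
  subs (cst b * var_u) (cst (b ^+ (k + 1)) * var_v) q = q.
Proof.
move=> hb Hq; apply: coef2_inj => x y; rewrite coef2_subs_diag.
have [c0|cn0] := eqVneq (coef2 q x y) 0; first by rewrite c0 mul0r.
have /dvdnP [m Hm] := Hq _ _ cn0.
by rewrite -exprM -exprD Hm mulnC exprM hb expr1n mulr1.
Qed.

Lemma fixed_cyc_coef (b : K) q : (2 * k).-primitive_root b ->
  subs (cst b * var_u) (cst (b ^+ (k + 1)) * var_v) q = q -> cyc_coef q.
Proof.
move=> hb Hq x y Hc.
have H2 : coef2 q x y = coef2 q x y * b ^+ (x + (k + 1) * y).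
  by rewrite -{1}Hq coef2_subs_diag [in RHS]exprD [in RHS]exprM.
have : b ^+ (x + (k + 1) * y) == 1 by apply/eqP; apply: (mulfI Hc); rewrite mulr1 -H2.
by rewrite -(prim_order_dvd hb).
Qed.

Lemma cyc_invariantE (z : K) q : (2 * k).-primitive_root z ->
  is_invariant (@comm_mul K) (cyc_gens (k + 1) z) q <-> cyc_coef q.
Proof.
move=> hz; split => [Hq | Hq g /(in_gen_cyc hz) [n ->]].
  apply: (fixed_cyc_coef hz); rewrite -mat_act_diag2; apply: Hq.
  exists [:: diag2 z (z ^+ (k + 1))]; split; last by rewrite /= mulmx1.
  by rewrite /= andbT !inE eqxx.
rewrite mat_act_diag2 exprAC; apply: cyc_coef_fixed => //.
by rewrite exprAC (prim_expr_order hz) expr1n.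
Qed.

Lemma w_parity (w : K) n s : (2 * k).-primitive_root w -> (k %| s)%N ->
  w ^+ (n * s) = w ^+ (odd n * s).
Proof.
move=> hw /dvdnP [r ->]; rewrite -{1}(odd_double_half n) mulnDl exprD.
have -> : ((n./2).*2 * (r * k) = (2 * k) * (n./2 * r))%N by rewrite -muln2; lia.
by rewrite [w ^+ (2 * k * _)]exprM (prim_expr_order hw) expr1n mulr1.
Qed.

Lemma G_gen_in (w : K) : in_gen (G_gens 1 k w) (Gmx (w ^+ 1) true).
Proof.
exists [:: Gmx (w ^+ 1) true]; split; last by rewrite /= mulmx1.
have -> : Gmx (w ^+ 1) true = \matrix_(i < 2, j < 2) (if i == j then 0 else w ^+ 1).
  by apply/matrixP => i j; rewrite !mxE; case: (ord2P i) => ->; case: (ord2P j) => ->.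
by rewrite /= andbT !inE eqxx orbT.
Qed.

Lemma skew_invariant_coef (w : K) p : (2 * k).-primitive_root w ->
  is_invariant (@skew_mul K) (G_gens 1 k w) p -> skew_coef w p.
Proof.
move=> hw Hp.
have E1 x y : coef2 p x y = coef2 p y x * (w ^+ y * w ^+ x * (-1) ^+ (y * x)).
  by rewrite -{1}(Hp _ (G_gen_in w)) coef2_act_Gmx !expr1.
split=> // x y Hc.
(* g^2 multiplies c_xy by w^(2(x+y)), hence 2k | 2(x + y) *)
have H2 : coef2 p x y = coef2 p x y * w ^+ (2 * (x + y)).
  rewrite {1}E1 E1 -mulrA (mulnC x y); congr (_ * _).
  have Hs : (-1) ^+ (y * x) * (-1) ^+ (y * x) = 1 :> K.
    by rewrite -exprD -signr_odd addnn odd_double.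
  rewrite mul2n -addnn !exprD.
  transitivity (w ^+ x * w ^+ x * w ^+ y * w ^+ y * ((-1) ^+ (y * x) * (-1) ^+ (y * x))).
    by ring.
  by rewrite Hs mulr1; ring.
have : w ^+ (2 * (x + y)) == 1 by apply/eqP; apply: (mulfI Hc); rewrite mulr1 -H2.
by rewrite -(prim_order_dvd hw) dvdn_pmul2l.
Qed.

Lemma skew_coef_invariant (w : K) p : (2 * k).-primitive_root w ->
  skew_coef w p -> is_invariant (@skew_mul K) (G_gens 1 k w) p.
Proof.
move=> hw [E1 Sp] g /(in_gen_G1k hw) [n ->].
apply: coef2_inj => x y; rewrite coef2_act_Gmx.
case: ifPn => Hn.
  have [c0|cn0] := eqVneq (coef2 p y x) 0; first by rewrite c0 mul0r E1 c0 mul0r.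
  rewrite [RHS]E1 -!exprM -!exprD -!mulnDr (w_parity _ hw (Sp _ _ cn0)) Hn mul1n.
  by rewrite addnC.
have [c0|cn0] := eqVneq (coef2 p x y) 0; first by rewrite c0 mul0r.
rewrite -!exprM -exprD -mulnDr (w_parity _ hw (Sp _ _ cn0)) (negbTE Hn).
by rewrite mul0n expr0 mulr1.
Qed.

Lemma skew_invariantE (w : K) p : (2 * k).-primitive_root w ->
  is_invariant (@skew_mul K) (G_gens 1 k w) p <-> skew_coef w p.
Proof. by move=> hw; split; [apply: skew_invariant_coef | apply: skew_coef_invariant]. Qed.

End Invariants.

Section Isomorphism.
Variable K : fieldType.
Notation PP := {poly {poly K}}.
Hypothesis two_nz : (2%:R : K) != 0.
Variables k t : nat.
Hypothesis Hkt : k = (t * 4)%N.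
Hypothesis hk : (0 < k)%N.
Variable w : K.
Hypothesis hw : (2 * k).-primitive_root w.

Local Notation a := (alpha t w).

Definition iso (p : PP) : PP := lin_uv (theta p).

Lemma half_of (x y : nat) : (k %| x + y)%N -> exists s, (x + y = 2 * s)%N.
Proof. by move=> /dvdnP [m Hm]; exists (m * 2 * t)%N; rewrite Hm Hkt; lia. Qed.

Lemma diag_fixedE r : diag_by a r = r <-> cyc_coef k r.
Proof.
have ha := alpha_prim Hkt hk hw.
rewrite /diag_by (alpha_opp Hkt hk hw); split; first exact: fixed_cyc_coef.
exact: cyc_coef_fixed (prim_expr_order ha).
Qed.

Lemma theta_swap_fixed p : skew_coef k w p -> swap_by a (theta p) = theta p.
Proof.
move=> [E1 Sp]; apply: coef2_inj => x y.
rewrite coef2_subs_swap !coef2_theta [in RHS]E1.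
have [c0|cn0] := eqVneq (coef2 p y x) 0; first by rewrite c0 !mul0r.
have [s Hs] := half_of (Sp _ _ cn0).
rewrite -[a ^+ y * a ^+ x]exprD Hs (alpha_even Hkt hk hw) -Hs [w ^+ (y + x)]exprD.
transitivity (coef2 p y x * (w ^+ y * w ^+ x) * (sgn2 K x * (-1) ^+ s)); first by ring.
by rewrite (sgn2_half K (etrans (addnC x y) Hs)); ring.
Qed.

Lemma swap_fixed_theta r : swap_by a r = r -> skew_coef k w (theta r).
Proof.
move=> HG.
have E x y : coef2 r x y = coef2 r y x * (a ^+ y * a ^+ x).
  by rewrite -{1}HG coef2_subs_swap.
have Sr x y : coef2 r x y != 0 -> (k %| x + y)%N.
  move=> Hc; have H2 : coef2 r x y = coef2 r x y * a ^+ (2 * (x + y)).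
    by rewrite {1}E E -mulrA mul2n -addnn !exprD; congr (_ * _); ring.
  have : a ^+ (2 * (x + y)) == 1 by apply/eqP; apply: (mulfI Hc); rewrite mulr1 -H2.
  by rewrite -(prim_order_dvd (alpha_prim Hkt hk hw)) dvdn_pmul2l.
split=> [x y | x y].
  rewrite !coef2_theta [in LHS]E.
  have [c0|cn0] := eqVneq (coef2 r y x) 0; first by rewrite c0 !mul0r.
  have [s Hs] := half_of (Sr _ _ cn0).
  rewrite -[a ^+ y * a ^+ x]exprD Hs (alpha_even Hkt hk hw) -Hs.
  rewrite [w ^+ (y + x)]exprD (mulnC y x).
  transitivity (coef2 r y x * (w ^+ y * w ^+ x) * (sgn2 K y * (-1) ^+ s)); first by ring.
  by rewrite (sgn2_half K Hs); ring.
rewrite coef2_theta => Hc; apply: Sr; apply: contraNN Hc => /eqP ->; by rewrite mul0r.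
Qed.

Lemma iso_maps p : skew_coef k w p -> cyc_coef k (iso p).
Proof. by move=> Hp; apply/diag_fixedE; rewrite /iso -lin_uv_swap theta_swap_fixed. Qed.

Lemma iso_onto q : cyc_coef k q -> exists2 p, skew_coef k w p & iso p = q.
Proof.
move=> Hq; exists (theta (lin_uv_inv q)); last by rewrite /iso thetaK lin_uvK.
apply: swap_fixed_theta; rewrite -(lin_uv_inv_diag two_nz).
by congr lin_uv_inv; apply/diag_fixedE.
Qed.

Lemma iso_inj p p' : iso p = iso p' -> p = p'.
Proof.
move=> H; rewrite -(thetaK p) -(thetaK p'); congr theta.
by have := congr1 (@lin_uv_inv K) H; rewrite /iso !(lin_uv_invK two_nz).
Qed.

(* G_{1,k}-invariants live in even total degree, as 2 | k *)
Lemma skew_coef_even p : skew_coef k w p -> even_supp p.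
Proof.
move=> [_ Sp] x y Hc; have := Sp _ _ Hc; rewrite Hkt => Hd.
by rewrite -dvdn2; apply: dvdn_trans Hd; apply: dvdn_mull.
Qed.

Lemma iso_alg_iso :
  alg_iso_on (@skew_mul K) (@comm_mul K) (skew_coef k w) (cyc_coef k) iso.
Proof.
split; [exact: iso_maps | exact: iso_onto | by move=> p p' _ _ /iso_inj |].
split.
- by move=> p p' _ _; rewrite /iso thetaD /lin_uv subsD.
- move=> p p' /skew_coef_even Ep /skew_coef_even Ep'.
  by rewrite /iso theta_skew_mul // /lin_uv subsM.
- by move=> c p _; rewrite /iso theta_cstM /lin_uv subs_cstM.
- by rewrite /iso (@theta1 K) /lin_uv subs1.
Qed.

End Isomorphism.

Lemma alg_iso_on_equiv (K : fieldType)
  (mul1 mul2 : {poly {poly K}} -> {poly {poly K}} -> {poly {poly K}})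
  (P P' Q Q' : {poly {poly K}} -> Prop) (f : {poly {poly K}} -> {poly {poly K}}) :
  (forall p, P p <-> P' p) -> (forall q, Q q <-> Q' q) ->
  alg_iso_on mul1 mul2 P' Q' f -> alg_iso_on mul1 mul2 P Q f.
Proof.
move=> EP EQ [maps onto inj [add mul scal one]]; split.
- by move=> p /EP /maps /EQ.
- by move=> q /EQ /onto [p /EP Hp <-]; exists p.
- by move=> p p' /EP Hp /EP Hp'; apply: inj.
split=> //.
- by move=> p p' /EP Hp /EP Hp'; apply: add.
- by move=> p p' /EP Hp /EP Hp'; apply: mul.
- by move=> c p /EP; apply: scal.
Qed.

Unset Implicit Arguments. Set Strict Implicit.

Theorem mainTheorem15 (K : closedFieldType) (hchar : [pchar K] =i pred0)
  (k : nat) (hk : (0 < k)%N) (hk4 : (4 %| k)%N)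
  (w : K) (hw : (2 * k).-primitive_root w)
  (z : K) (hz : (2 * k).-primitive_root z) :
  exists f : {poly {poly K}} -> {poly {poly K}},
    alg_iso_on (@skew_mul K) (@comm_mul K)
      (is_invariant (@skew_mul K) (G_gens 1 k w))
      (is_invariant (@comm_mul K) (cyc_gens (k + 1) z)) f.
Proof.
have [t Hkt] := dvdnP hk4.
have two_nz : (2%:R : K) != 0 by rewrite ((pcharf0P K).1 hchar 2).
exists (@iso K).
apply: (alg_iso_on_equiv (fun p => skew_invariantE p hw) (fun q => cyc_invariantE q hz)).
apply: (iso_alg_iso two_nz Hkt hk hw).
Qed.
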